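(* Let $\Omega=\mathbb T^2$, $\omega,\nu\in(0,1)$, $T>0$, and let $\vec u^o:\Omega\times[0,T]\to\mathbb R^2$ be a given smooth velocity field (in particular $\operatorname{div}\vec u^o\in L^1(0,T;L^\infty(\Omega))$). Let $(h_m,A_m)$ be a sufficiently regular (e.g. classical) solution on $[0,T]$ of the transport system $$\partial_t h_m+\operatorname{div}(h_m\vec u^o)=\mathcal S_{h_m,\omega,\nu},\qquad \partial_tA_m+\operatorname{div}(A_m\vec u^o)=\mathcal S_{A_m,\omega,\nu}+A_m\operatorname{div}\vec u^o\cdot\chi^\omega_{A_m},$$ with initial data $A_m(0)=A_{\rm in}$ satisfying $0\le A_{\rm in}\le1$. Then $0\le A_m(t)\le 1$ on $\Omega$ for all $t\in[0,T]$.
   Context: $\psi^+=\max\{\psi,0\}$, $\psi^-=\psi^+-\psi$. $f:\mathbb R\to\mathbb R$ is a bounded smooth function with $\underline f\le f\le\overline f$, $h_0>0$ a constant. For functions $h,A$: $$\chi^\nu_h=\frac{h^+}{h^++\nu},\qquad \mathcal S_{h,\omega,\nu}=\big[f(h^+/(A^++\omega))A+(1-A)f(0)\big]\chi^\nu_h,$$ $$\mathcal S_{A,\omega,\nu}=\frac{(f(0))^+}{h_0+\nu}(1-A)-\frac{A}{2h^++\nu}\cdot\frac{\sqrt{|\mathcal S_{h,\omega,\nu}|^2+\omega^2}-\mathcal S_{h,\omega,\nu}}{2},\qquad \chi^\omega_A=1-\frac{(1-A)^+}{(1-A)^++\omega}.$$ In the system, $\mathcal S_{h_m,\omega,\nu}$,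 $\mathcal S_{A_m,\omega,\nu}$, $\chi^\omega_{A_m}$ mean these expressions evaluated at $(h,A)=(h_m,A_m)$. *)

From Stdlib Require Import Reals.
From Coquelicot Require Import Coquelicot.
Open Scope R_scope.

Definition pos (x : R) : R := Rmax x 0.

Definition chi_h (nu h : R) : R := pos h / (pos h + nu).

Definition S_h (f : R -> R) (omega nu h A : R) : R :=
  (f (pos h / (pos A + omega)) * A + (1 - A) * f 0) * chi_h nu h.

Definition S_A (f : R -> R) (h0 omega nu h A : R) : R :=
  pos (f 0) / (h0 + nu) * (1 - A)
  - A / (2 * pos h + nu) *
    ((sqrt ((S_h f omega nu h A) ^ 2 + omega ^ 2) - S_h f omega nu h A) / 2).

Definition chi_A (omega A : R) : R := 1 - pos (1 - A) / (pos (1 - A) + omega).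

(* Space-time fields are functions F t x y on R x R^2. *)

(* Periodicity with period 1 in both space variables: functions on T^2 = (R/Z)^2. *)
Definition periodic2 (g : R -> R -> R) : Prop :=
  forall x y, g (x + 1) y = g x y /\ g x (y + 1) = g x y.

Definition periodic3 (F : R -> R -> R -> R) : Prop :=
  forall t, periodic2 (F t).

Definition cont3 (G : R -> R -> R -> R) : Prop :=
  forall t x y,
    continuous (fun p : R * R * R => G (fst (fst p)) (snd (fst p)) (snd p)) (t, x, y).

Definition C1_3 (F : R -> R -> R -> R) : Prop :=
  exists Ft Fx Fy : R -> R -> R -> R,
    (forall t x y,
        is_derive (fun s => F s x y) t (Ft t x y) /\
        is_derive (fun s => F t s y) x (Fx t x y) /\
        is_derive (fun s => F t x s) y (Fy t x y)) /\
    cont3 F /\ cont3 Ft /\ cont3 Fx /\ cont3 Fy.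

Definition smooth1 (f : R -> R) : Prop := forall n x, ex_derive_n f n x.

Definition dt (F : R -> R -> R -> R) (t x y : R) : R := Derive (fun s => F s x y) t.

Definition div (U1 U2 : R -> R -> R -> R) (t x y : R) : R :=
  Derive (fun s => U1 t s y) x + Derive (fun s => U2 t x s) y.

(* In non-conservative form the equation reads
     A_t + u . grad A = S_A(h, A) + A (div u) (chi_A(A) - 1),
   and the transport term vanishes wherever A(t,.) attains a spatial extremum.
   Upper bound: chi_A(1) = 1 and S_A(h, 1) < 0, so A strictly decreases where
   it touches 1.  Lower bound: for A < 0 the source is nonnegative and the drift
   is at least K A (K bounds |div u|), so the barrier A + eps exp((K+1) t)
   strictly increases where it touches 0; letting eps -> 0 gives A >= 0.
   Both are instances of one first touching time principle
   ([first_touching_nonneg]) for periodic C^1 functions, proved by continuous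
   induction in time and compactness of the cell [0,1]^2.  The file develops
   continuity, periodicity and compactness tools, that principle, calculus at
   extrema, the algebra of the source terms, the non-conservative form of the
   equation, the two bounds, and finally the theorem. *)

From Pilot Require Import Defs.
From Stdlib Require Import Reals Lra List Classical ClassicalEpsilon.
From Coquelicot Require Import Coquelicot.
Open Scope R_scope.

Lemma cont3_eps_delta (G : R -> R -> R -> R) : cont3 G ->
  forall t x y eps, 0 < eps -> exists d, 0 < d /\
    forall t' x' y', Rabs (t' - t) < d -> Rabs (x' - x) < d -> Rabs (y' - y) < d ->
      Rabs (G t' x' y' - G t x y) < eps.
Proof.
  intros HG t x y eps Heps.
  destruct (proj1 (filterlim_locally _ _) (HG t x y) (mkposreal eps Heps)) as [d Hd].
  exists (pos d); split; [apply cond_pos|].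
  intros t' x' y' Ht Hx Hy.
  exact (Hd (t', x', y') (conj (conj Ht Hx) Hy)).
Qed.

Lemma cont3_plus (F G : R -> R -> R -> R) :
  cont3 F -> cont3 G -> cont3 (fun t x y => F t x y + G t x y).
Proof. intros HF HG t x y. exact (continuous_plus _ _ _ (HF t x y) (HG t x y)). Qed.

Lemma cont3_minus (F G : R -> R -> R -> R) :
  cont3 F -> cont3 G -> cont3 (fun t x y => F t x y - G t x y).
Proof. intros HF HG t x y. exact (continuous_minus _ _ _ (HF t x y) (HG t x y)). Qed.

Lemma cont3_opp (F : R -> R -> R -> R) : cont3 F -> cont3 (fun t x y => - F t x y).
Proof. intros HF t x y. exact (continuous_opp _ _ (HF t x y)). Qed.

Lemma cont3_const (c : R) : cont3 (fun _ _ _ => c).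
Proof. intros t x y. apply continuous_const. Qed.

Lemma cont3_time (g : R -> R) : (forall t, continuous g t) -> cont3 (fun t _ _ => g t).
Proof.
  intros Hg t x y.
  apply (continuous_comp (fun p : R * R * R => fst (fst p)) g).
  - apply (continuous_comp fst fst); apply continuous_fst.
  - apply Hg.
Qed.

Lemma periodic_shift_Z (g : R -> R) : (forall x, g (x + 1) = g x) ->
  forall (n : Z) x, g (x + IZR n) = g x.
Proof.
  intros Hg n. induction n as [|n IH|n IH] using Z.peano_ind; intros x.
  - now rewrite Rplus_0_r.
  - rewrite succ_IZR, <- Rplus_assoc, Hg. apply IH.
  - unfold Z.pred. rewrite plus_IZR.
    replace (x + (IZR n + IZR (-1))) with ((x - 1) + IZR n) by (simpl; lra).
    rewrite IH, <- (Hg (x - 1)). f_equal; ring.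
Qed.

Lemma periodic2_cell (g : R -> R -> R) : periodic2 g ->
  forall x y, exists x0 y0, 0 <= x0 <= 1 /\ 0 <= y0 <= 1 /\ g x y = g x0 y0.
Proof.
  intros Hg x y.
  set (n := (up x - 1)%Z). set (m := (up y - 1)%Z).
  exists (x - IZR n), (y - IZR m).
  destruct (archimed x). destruct (archimed y).
  split; [|split].
  - unfold n. rewrite minus_IZR. lra.
  - unfold m. rewrite minus_IZR. lra.
  - transitivity (g (x - IZR n) y).
    + rewrite <- (periodic_shift_Z (fun a => g a y) (fun a => proj1 (Hg a y)) n (x - IZR n)).
      f_equal; ring.
    + rewrite <- (periodic_shift_Z (g (x - IZR n)) (fun b => proj2 (Hg _ b)) m (y - IZR m)).
      f_equal; ring.
Qed.

Fixpoint list_bound (g : Compactness.Tn 3 R -> R) (l : list (Compactness.Tn 3 R)) : R :=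
  match l with nil => 0 | cons p l' => Rmax (Rabs (g p) + 1) (list_bound g l') end.

Lemma list_bound_in g l p : In p l -> Rabs (g p) + 1 <= list_bound g l.
Proof.
  induction l as [|q l IH]; simpl; [tauto|].
  intros [->|H]; [apply Rmax_l|]. eapply Rle_trans; [apply IH; auto|apply Rmax_r].
Qed.

Lemma cont3_bounded_on_box (G : R -> R -> R -> R) (T : R) : cont3 G ->
  exists K, forall t x y, 0 <= t <= T -> 0 <= x <= 1 -> 0 <= y <= 1 -> Rabs (G t x y) <= K.
Proof.
  intros HG.
  set (G3 := fun p : Compactness.Tn 3 R => match p with (t, (x, (y, _))) => G t x y end).
  assert (Hdelta : forall p : Compactness.Tn 3 R, { d : posreal |
     forall t' x' y', Rabs (t' - fst p) < d -> Rabs (x' - fst (snd p)) < d ->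
       Rabs (y' - fst (snd (snd p))) < d -> Rabs (G t' x' y' - G3 p) < 1 }).
  { intros p. apply constructive_indefinite_description.
    destruct p as [t [x [y []]]].
    destruct (cont3_eps_delta G HG t x y 1 Rlt_0_1) as [d [Hd0 Hd]].
    exists (mkposreal d Hd0). exact Hd. }
  apply NNPP. intros Hno.
  apply (compactness_list 3 (0, (0, (0, tt))) (T, (1, (1, tt))) (fun p => proj1_sig (Hdelta p))).
  intros [l Hcover]. apply Hno. exists (list_bound G3 l).
  intros t x y Ht Hx Hy.
  destruct (Hcover (t, (x, (y, tt)))) as [p [Hin [_ Hclose]]]; [simpl; tauto|].
  pose proof (list_bound_in G3 l p Hin) as Hbound.
  destruct p as [t0 [x0 [y0 []]]]. destruct Hclose as [H1 [H2 [H3 _]]].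
  pose proof (proj2_sig (Hdelta (t0, (x0, (y0, tt)))) t x y H1 H2 H3) as Hnear.
  simpl in Hnear, Hbound.
  pose proof (Rabs_triang_inv (G t x y) (G t0 x0 y0)). lra.
Qed.

(* A property holding at 0, closed under left limits and locally extendable to
   the right holds on all of [0, T]: consider the supremum of the good times. *)
Lemma continuous_induction (P : R -> Prop) (T : R) : 0 < T -> P 0 ->
  (forall t, 0 < t <= T -> (forall s, 0 <= s < t -> P s) -> P t) ->
  (forall t, 0 <= t < T -> (forall s, 0 <= s <= t -> P s) ->
     exists d, 0 < d /\ forall s, t <= s <= t + d -> P s) ->
  forall t, 0 <= t <= T -> P t.
Proof.
  intros HT H0 Hclosed Hextend.
  set (E := fun t => 0 <= t <= T /\ forall s, 0 <= s <= t -> P s).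
  assert (HE0 : E 0) by (split; [lra|]; intros s Hs; replace s with 0 by lra; exact H0).
  assert (Hbound : bound E) by (exists T; intros z [Hz _]; lra).
  destruct (completeness E Hbound (ex_intro _ 0 HE0)) as [m [Hub Hlub]].
  assert (Hm0 : 0 <= m) by (apply Hub, HE0).
  assert (HmT : m <= T) by (apply Hlub; intros z [Hz _]; lra).
  assert (Hbelow : forall s, 0 <= s < m -> P s).
  { intros s Hs. destruct (classic (exists e, E e /\ s <= e)) as [[e [[_ He] Hse]]|Hno].
    - apply He; lra.
    - exfalso. assert (m <= s); [|lra].
      apply Hlub. intros z Hz. destruct (Rle_dec z s) as [|Hzs]; [assumption|].
      exfalso; apply Hno; exists z; split; [assumption|lra]. }
  assert (Hupto : forall s, 0 <= s <= m -> P s).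
  { intros s Hs. destruct (Rle_lt_or_eq_dec s m (proj2 Hs)) as [Hlt| ->].
    - apply Hbelow; lra.
    - destruct (Req_dec m 0) as [->|Hm]; [exact H0|].
      apply Hclosed; [lra|exact Hbelow]. }
  assert (HmT' : m = T).
  { destruct (Rle_lt_or_eq_dec m T HmT) as [Hlt|]; [exfalso|assumption].
    destruct (Hextend m (conj Hm0 Hlt) Hupto) as [d [Hd Hd']].
    assert (Hm' : E (Rmin (m + d) T)).
    { pose proof (Rmin_l (m + d) T). pose proof (Rmin_r (m + d) T).
      split; [split; [apply Rmin_glb|]; lra|].
      intros s Hs. destruct (Rle_dec s m); [apply Hupto|apply Hd']; lra. }
    specialize (Hub _ Hm'). unfold Rmin in Hub. destruct (Rle_dec (m + d) T); lra. }
  intros t Ht. apply Hupto. lra.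
Qed.

Section FirstTouching.

Variables (Phi Phit : R -> R -> R -> R) (T : R).
Hypothesis HT : 0 < T.
Hypothesis Hderiv : forall t x y, is_derive (fun s => Phi s x y) t (Phit t x y).
Hypothesis Hcont : cont3 Phi.
Hypothesis Hcontt : cont3 Phit.
Hypothesis Hper : periodic3 Phi.
Hypothesis Htouch : forall t x y, 0 <= t < T -> 0 <= x <= 1 -> 0 <= y <= 1 ->
  (forall x' y', 0 <= Phi t x' y') -> Phi t x y = 0 -> 0 < Phit t x y.

Lemma nonneg_left_limit t : 0 < t -> (forall s, 0 <= s < t -> forall x y, 0 <= Phi s x y) ->
  forall x y, 0 <= Phi t x y.
Proof.
  intros Ht Hbefore x y. apply Rnot_lt_le. intros Hneg.
  destruct (cont3_eps_delta Phi Hcont t x y (- Phi t x y)) as [d [Hd Hnear]]; [lra|].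
  set (s := Rmax 0 (t - d / 2)).
  assert (Hs : 0 <= s < t /\ Rabs (s - t) < d).
  { unfold s, Rmax. destruct (Rle_dec 0 (t - d / 2)); rewrite Rabs_left; lra. }
  assert (Hzero : Rabs (x - x) < d /\ Rabs (y - y) < d)
    by (rewrite !Rminus_eq_0, Rabs_R0; lra).
  specialize (Hnear s x y (proj2 Hs) (proj1 Hzero) (proj2 Hzero)).
  specialize (Hbefore s (proj1 Hs) x y).
  apply Rabs_def2 in Hnear. lra.
Qed.

(* Near a point of a nonnegative slice, either Phi is positive (continuity) or
   it vanishes and Phit > 0 (monotonicity): Phi stays nonnegative shortly after. *)
Lemma nonneg_persists_locally t x y : (forall x' y', 0 <= Phi t x' y') ->
  (Phi t x y = 0 -> 0 < Phit t x y) ->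
  exists d : posreal, forall s x' y', t <= s < t + d ->
    Rabs (x' - x) < d -> Rabs (y' - y) < d -> 0 <= Phi s x' y'.
Proof.
  intros Hslice Hkey.
  destruct (Rle_lt_or_eq_dec 0 (Phi t x y) (Hslice x y)) as [Hpos|Hzero].
  - destruct (cont3_eps_delta Phi Hcont t x y (Phi t x y) Hpos) as [d [Hd Hnear]].
    exists (mkposreal d Hd). simpl. intros s x' y' Hs Hx Hy.
    assert (Rabs (s - t) < d) by (rewrite Rabs_right; lra).
    specialize (Hnear s x' y' H Hx Hy). apply Rabs_def2 in Hnear. lra.
  - assert (Hpt : 0 < Phit t x y) by (apply Hkey; auto).
    destruct (cont3_eps_delta Phit Hcontt t x y (Phit t x y) Hpt) as [d [Hd Hnear]].
    exists (mkposreal d Hd). simpl. intros s x' y' Hs Hx Hy.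
    destruct (Rle_lt_or_eq_dec t s (proj1 Hs)) as [Hlt| <-]; [|apply Hslice].
    assert (Hincr : Phi t x' y' < Phi s x' y').
    { apply (incr_function (fun r => Phi r x' y') (t - d) (t + d) (fun r => Phit r x' y'));
        simpl; try lra.
      - intros r _ _. apply Hderiv.
      - intros r Hr1 Hr2.
        assert (Rabs (r - t) < d) by (apply Rabs_def1; lra).
        specialize (Hnear r x' y' H Hx Hy). apply Rabs_def2 in Hnear. lra. }
    specialize (Hslice x' y'). lra.
Qed.

(* By compactness of the cell and periodicity, a nonnegative slice at t < T
   stays nonnegative on a whole time interval [t, t + d]. *)
Lemma nonneg_persists t : 0 <= t < T -> (forall x y, 0 <= Phi t x y) ->
  exists d, 0 < d /\ forall s, t <= s <= t + d -> forall x y, 0 <= Phi s x y.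
Proof.
  intros Ht Hslice.
  assert (Hdelta : forall x y, { d : posreal | 0 <= x <= 1 -> 0 <= y <= 1 ->
      forall s x' y', t <= s < t + d -> Rabs (x' - x) < d -> Rabs (y' - y) < d ->
        0 <= Phi s x' y' }).
  { intros x y. apply constructive_indefinite_description.
    destruct (classic (0 <= x <= 1 /\ 0 <= y <= 1)) as [[Hx Hy]|Hout].
    - destruct (nonneg_persists_locally t x y Hslice) as [d Hd].
      { intros Hz. apply Htouch; auto. }
      exists d. auto.
    - exists (mkposreal 1 Rlt_0_1). intros Hx Hy. tauto. }
  destruct (compactness_value_2d 0 1 0 1 (fun x y => proj1_sig (Hdelta x y))) as [d Hd].
  exists (d / 2). split; [pose proof (cond_pos d); lra|].
  intros s Hs x y.
  destruct (periodic2_cell (Phi s) (Hper s) x y) as [x0 [y0 [Hx0 [Hy0 ->]]]].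
  apply NNPP. intros Hneg. apply (Hd x0 y0 Hx0 Hy0).
  intros [u [v [Hu [Hv [Hxu [Hyv Hdu]]]]]].
  apply Hneg, (proj2_sig (Hdelta u v) Hu Hv s x0 y0); auto.
  pose proof (cond_pos d). simpl in Hdu. lra.
Qed.

Lemma first_touching_nonneg : (forall x y, 0 <= Phi 0 x y) ->
  forall t x y, 0 <= t <= T -> 0 <= Phi t x y.
Proof.
  intros H0 t x y Ht. revert x y. revert t Ht.
  apply (continuous_induction (fun t => forall x y, 0 <= Phi t x y) T HT H0).
  - intros t Ht. apply nonneg_left_limit. lra.
  - intros t Ht Hupto. apply nonneg_persists; [assumption|]. apply Hupto. lra.
Qed.

End FirstTouching.

Lemma is_derive_at_max (g : R -> R) x l : is_derive g x l -> (forall z, g z <= g x) -> l = 0.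
Proof.
  intros Hd Hmax.
  pose (pr := exist (fun l => derivable_pt_lim g x l) l (proj1 (is_derive_Reals g x l) Hd)).
  change l with (derive_pt g x pr).
  apply (deriv_maximum g (x - 1) (x + 1) x pr); [lra|lra|]. intros; apply Hmax.
Qed.

Lemma is_derive_at_min (g : R -> R) x l : is_derive g x l -> (forall z, g x <= g z) -> l = 0.
Proof.
  intros Hd Hmin.
  pose (pr := exist (fun l => derivable_pt_lim g x l) l (proj1 (is_derive_Reals g x l) Hd)).
  change l with (derive_pt g x pr).
  apply (deriv_minimum g (x - 1) (x + 1) x pr); [lra|lra|]. intros; apply Hmin.
Qed.

Lemma div_eval (U1 U2 U1x U2y : R -> R -> R -> R) t x y :
  is_derive (fun s => U1 t s y) x (U1x t x y) -> is_derive (fun s => U2 t x s) y (U2y t x y) ->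
  div U1 U2 t x y = U1x t x y + U2y t x y.
Proof.
  intros H1 H2. unfold div. f_equal; now apply is_derive_unique.
Qed.

Lemma div_product (A u1 u2 Ax Ay U1x U2y : R -> R -> R -> R) t x y :
  is_derive (fun s => A t s y) x (Ax t x y) -> is_derive (fun s => A t x s) y (Ay t x y) ->
  is_derive (fun s => u1 t s y) x (U1x t x y) -> is_derive (fun s => u2 t x s) y (U2y t x y) ->
  div (fun s a b => A s a b * u1 s a b) (fun s a b => A s a b * u2 s a b) t x y
  = Ax t x y * u1 t x y + Ay t x y * u2 t x y + A t x y * (U1x t x y + U2y t x y).
Proof.
  intros HAx HAy H1 H2.
  rewrite (div_eval _ _ (fun t x y => Ax t x y * u1 t x y + A t x y * U1x t x y)
                        (fun t x y => Ay t x y * u2 t x y + A t x y * U2y t x y)).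
  - ring.
  - exact (is_derive_mult _ _ x _ _ HAx H1 Rmult_comm).
  - exact (is_derive_mult _ _ y _ _ HAy H2 Rmult_comm).
Qed.

Lemma pos_nonneg x : 0 <= Defs.pos x.
Proof. apply Rmax_r. Qed.

Lemma pos_of_nonneg x : 0 <= x -> Defs.pos x = x.
Proof. intros Hx. apply Rmax_left. lra. Qed.

Lemma sqrt_regularization_gap S w : 0 < w -> S < sqrt (S ^ 2 + w ^ 2).
Proof.
  intros Hw. destruct (Rlt_or_le S 0) as [Hneg|Hnn].
  - pose proof (sqrt_pos (S ^ 2 + w ^ 2)). lra.
  - rewrite <- (sqrt_pow2 S) at 1 by lra. apply sqrt_lt_1_alt.
    pose proof (pow2_ge_0 S). pose proof (pow_lt w 2 Hw). lra.
Qed.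

(* The cutoff chi_A switches the drift term off at full concentration. *)
Lemma chi_A_at_1 omega : 0 < omega -> chi_A omega 1 = 1.
Proof.
  intros Homega. unfold chi_A. rewrite Rminus_eq_0, (pos_of_nonneg 0) by lra.
  field. lra.
Qed.

Lemma S_A_at_1_neg f h0 omega nu h : 0 < omega -> 0 < nu ->
  S_A f h0 omega nu h 1 < 0.
Proof.
  intros Homega Hnu. unfold S_A. rewrite Rminus_eq_0, Rmult_0_r, Rminus_0_l.
  pose proof (sqrt_regularization_gap (S_h f omega nu h 1) omega Homega).
  pose proof (pos_nonneg h).
  assert (0 < 1 / (2 * Defs.pos h + nu)) by (apply Rdiv_lt_0_compat; lra).
  assert (0 < 1 / (2 * Defs.pos h + nu) * ((sqrt (S_h f omega nu h 1 ^ 2 + omega ^ 2)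
                                             - S_h f omega nu h 1) / 2))
    by (apply Rmult_lt_0_compat; lra).
  lra.
Qed.

Lemma S_A_nonneg_of_neg f h0 omega nu h A : 0 < h0 -> 0 < omega -> 0 < nu -> A < 0 ->
  0 <= S_A f h0 omega nu h A.
Proof.
  intros Hh0 Homega Hnu HA. unfold S_A.
  set (S := S_h f omega nu h A).
  pose proof (sqrt_regularization_gap S omega Homega).
  pose proof (pos_nonneg h).
  assert (0 <= Defs.pos (f 0) / (h0 + nu) * (1 - A)).
  { apply Rmult_le_pos; [apply Rdiv_le_0_compat; [apply pos_nonneg|lra]|lra]. }
  assert (0 <= - (A / (2 * Defs.pos h + nu)) * ((sqrt (S ^ 2 + omega ^ 2) - S) / 2)).
  { apply Rmult_le_pos; [|lra]. unfold Rdiv. rewrite Ropp_mult_distr_l.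
    apply Rmult_le_pos; [lra|]. left; apply Rinv_0_lt_compat; lra. }
  lra.
Qed.

(* For A < 0 the drift A d (chi_A(A) - 1) is at least K A when |d| <= K,
   since 1 - chi_A(A) = (1-A)/(1-A+omega) lies in [0,1]. *)
Lemma drift_lower_bound omega A d K : 0 < omega -> A < 0 -> Rabs d <= K ->
  K * A <= A * d * (chi_A omega A - 1).
Proof.
  intros Homega HA Hd. unfold chi_A. rewrite (pos_of_nonneg (1 - A)) by lra.
  set (q := (1 - A) / (1 - A + omega)).
  assert (Hq : 0 <= q <= 1).
  { unfold q. split; [apply Rdiv_le_0_compat; lra|].
    apply (Rmult_le_reg_r (1 - A + omega)); [lra|].
    unfold Rdiv. rewrite Rmult_assoc, Rinv_l; lra. }
  pose proof (proj1 (Rabs_le_between d K) Hd).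
  replace (A * d * (1 - q - 1)) with ((- A) * (d * q)) by ring.
  replace (K * A) with ((- A) * (- K)) by ring.
  apply Rmult_le_compat_l; [lra|].
  pose proof (Rmult_le_pos (d + K) q ltac:(lra) ltac:(lra)).
  pose proof (Rmult_le_pos K (1 - q) ltac:(lra) ltac:(lra)).
  nra.
Qed.

Lemma nonconservative_form (A u1 u2 At Ax Ay U1x U2y : R -> R -> R -> R) S c t x y :
  is_derive (fun s => A s x y) t (At t x y) ->
  is_derive (fun s => A t s y) x (Ax t x y) -> is_derive (fun s => A t x s) y (Ay t x y) ->
  is_derive (fun s => u1 t s y) x (U1x t x y) -> is_derive (fun s => u2 t x s) y (U2y t x y) ->
  dt A t x y + div (fun s a b => A s a b * u1 s a b) (fun s a b => A s a b * u2 s a b) t x y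
  = S + A t x y * div u1 u2 t x y * c ->
  At t x y + Ax t x y * u1 t x y + Ay t x y * u2 t x y
  = S + A t x y * (U1x t x y + U2y t x y) * (c - 1).
Proof.
  intros HAt HAx HAy H1 H2 Heq.
  replace (dt A t x y) with (At t x y) in Heq by (symmetry; now apply is_derive_unique).
  rewrite (div_product A u1 u2 Ax Ay U1x U2y t x y HAx HAy H1 H2) in Heq.
  rewrite (div_eval u1 u2 U1x U2y t x y H1 H2) in Heq.
  lra.
Qed.

Lemma nonneg_of_perturbations (a b : R) : 0 < b ->
  (forall eps, 0 < eps -> 0 <= a + eps * b) -> 0 <= a.
Proof.
  intros Hb Hpert. apply Rle_plus_epsilon. intros eps Heps.
  specialize (Hpert (eps / b) ltac:(apply Rdiv_lt_0_compat; lra)).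
  replace (eps / b * b) with eps in Hpert by (field; lra). lra.
Qed.

Section ConcentrationBounds.

Variables (f : R -> R) (h0 omega nu T : R).
Variables (u1 u2 hm Am At Ax Ay D : R -> R -> R -> R).
Hypotheses (Hh0 : 0 < h0) (Homega : 0 < omega) (Hnu : 0 < nu) (HT : 0 < T).
Hypothesis HAt : forall t x y, is_derive (fun s => Am s x y) t (At t x y).
Hypothesis HAx : forall t x y, is_derive (fun s => Am t s y) x (Ax t x y).
Hypothesis HAy : forall t x y, is_derive (fun s => Am t x s) y (Ay t x y).
Hypotheses (HAc : cont3 Am) (HAtc : cont3 At) (HA_per : periodic3 Am).
Hypothesis HA_init : forall x y, 0 <= Am 0 x y <= 1.
(* the transport equation in non-conservative form, D playing the role of div u *)
Hypothesis Htransport : forall t x y, 0 <= t <= T ->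
  At t x y + Ax t x y * u1 t x y + Ay t x y * u2 t x y
  = S_A f h0 omega nu (hm t x y) (Am t x y) + Am t x y * D t x y * (chi_A omega (Am t x y) - 1).

Lemma transport_at_extremum t x y : 0 <= t <= T ->
  (forall x' y', Am t x' y' <= Am t x y) \/ (forall x' y', Am t x y <= Am t x' y') ->
  At t x y = S_A f h0 omega nu (hm t x y) (Am t x y)
             + Am t x y * D t x y * (chi_A omega (Am t x y) - 1).
Proof.
  intros Ht Hext.
  assert (Hgrad : Ax t x y = 0 /\ Ay t x y = 0).
  { destruct Hext as [Hmax|Hmin]; split.
    - apply (is_derive_at_max (fun s => Am t s y) x); [apply HAx|intros z; apply Hmax].
    - apply (is_derive_at_max (fun s => Am t x s) y); [apply HAy|intros z; apply Hmax].
    - apply (is_derive_at_min (fun s => Am t s y) x); [apply HAx|intros z; apply Hmin].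
    - apply (is_derive_at_min (fun s => Am t x s) y); [apply HAy|intros z; apply Hmin]. }
  pose proof (Htransport t x y Ht) as Heq.
  destruct Hgrad as [Hx Hy]. rewrite Hx, Hy in Heq. lra.
Qed.

(* Upper bound: 1 - A stays nonnegative, since A decreases wherever it touches 1. *)
Lemma concentration_le_1 t x y : 0 <= t <= T -> Am t x y <= 1.
Proof.
  intros Ht. enough (0 <= 1 - Am t x y) by lra. revert t x y Ht.
  apply (first_touching_nonneg (fun t x y => 1 - Am t x y) (fun t x y => - At t x y) T HT).
  - intros t x y. replace (- At t x y) with (0 - At t x y) by ring.
    exact (is_derive_minus (fun _ => 1) _ _ 0 _ (is_derive_const 1 t) (HAt t x y)).
  - exact (cont3_minus _ _ (cont3_const 1) HAc).
  - exact (cont3_opp _ HAtc).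
  - intros t x y. destruct (HA_per t x y) as [Hx Hy]. now rewrite Hx, Hy.
  - intros t x y Ht _ _ Hslice Hzero.
    cbv beta in *. assert (HA1 : Am t x y = 1) by lra.
    rewrite (transport_at_extremum t x y), HA1, chi_A_at_1 by
      (try lra; left; intros x' y'; specialize (Hslice x' y'); lra).
    pose proof (S_A_at_1_neg f h0 omega nu (hm t x y) Homega Hnu). lra.
  - intros x y. pose proof (HA_init x y). cbv beta. lra.
Qed.

(* Lower barrier: with K a bound for |D|, the function A + eps exp((K+1) t)
   increases wherever it touches 0, hence stays nonnegative. *)
Lemma concentration_barrier K :
  (forall t x y, 0 <= t <= T -> 0 <= x <= 1 -> 0 <= y <= 1 -> Rabs (D t x y) <= K) ->
  forall eps, 0 < eps -> forall t x y, 0 <= t <= T ->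
  0 <= Am t x y + eps * exp ((K + 1) * t).
Proof.
  intros HK eps Heps.
  set (C := K + 1).
  assert (Hbarrier : forall t, is_derive (fun s => eps * exp (C * s)) t (eps * (C * exp (C * t))))
    by (intros t; auto_derive; [exact I|ring]).
  assert (Hcont : forall g : R -> R, (forall t, ex_derive g t) -> cont3 (fun t _ _ => g t))
    by (intros g Hg; apply cont3_time; intros t; exact (ex_derive_continuous g t (Hg t))).
  apply (first_touching_nonneg (fun t x y => Am t x y + eps * exp (C * t))
                               (fun t x y => At t x y + eps * (C * exp (C * t))) T HT).
  - intros t x y. exact (is_derive_plus _ _ _ _ _ (HAt t x y) (Hbarrier t)).
  - apply (cont3_plus _ _ HAc), Hcont. intros t. eexists. apply Hbarrier.
  - apply (cont3_plus _ _ HAtc), Hcont. intros t. auto_derive. exact I.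
  - intros t x y. destruct (HA_per t x y) as [Hx Hy]. now rewrite Hx, Hy.
  - intros t x y Ht Hx Hy Hslice Hzero.
    pose proof (Rmult_lt_0_compat eps _ Heps (exp_pos (C * t))) as Hpos.
    assert (HAneg : Am t x y < 0) by lra.
    rewrite (transport_at_extremum t x y) by
      (try lra; right; intros x' y'; specialize (Hslice x' y'); lra).
    pose proof (S_A_nonneg_of_neg f h0 omega nu (hm t x y) _ Hh0 Homega Hnu HAneg).
    pose proof (drift_lower_bound omega _ _ K Homega HAneg (HK t x y ltac:(lra) Hx Hy)).
    assert (K * Am t x y = - (K * (eps * exp (C * t)))) by (replace (Am t x y) with
      (- (eps * exp (C * t))) by lra; ring).
    unfold C in *. nra.
  - intros x y. pose proof (HA_init x y).
    pose proof (Rmult_lt_0_compat eps _ Heps (exp_pos (C * 0))). cbv beta. lra.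
Qed.

(* Lower bound: letting eps go to 0 in the barrier. *)
Lemma concentration_ge_0 : cont3 D -> forall t x y, 0 <= t <= T -> 0 <= Am t x y.
Proof.
  intros HDc t x y Ht.
  destruct (cont3_bounded_on_box D T HDc) as [K HK].
  apply (nonneg_of_perturbations _ (exp ((K + 1) * t)) (exp_pos _)).
  intros eps Heps. exact (concentration_barrier K HK eps Heps t x y Ht).
Qed.

End ConcentrationBounds.

Theorem mainTheorem2
  (f : R -> R) (f_lo f_hi : R) (h0 omega nu T : R)
  (u1 u2 : R -> R -> R -> R)       (* velocity field u^o = (u1,u2), arguments t x y *)
  (hm Am : R -> R -> R -> R)        (* solution (h_m, A_m), arguments t x y *)
  (A_in : R -> R -> R)              (* initial datum on T^2 *)
  (Hf_smooth : smooth1 f)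
  (Hf_bnd : forall z, f_lo <= f z <= f_hi)
  (Hh0 : 0 < h0)
  (Homega : 0 < omega < 1) (Hnu : 0 < nu < 1) (HT : 0 < T)
  (Hu_per1 : periodic3 u1) (Hu_per2 : periodic3 u2)
  (Hu_reg1 : C1_3 u1) (Hu_reg2 : C1_3 u2)
  (Hh_per : periodic3 hm) (HA_per : periodic3 Am)
  (Hh_reg : C1_3 hm) (HA_reg : C1_3 Am)
  (Hh_eq : forall t x y, 0 <= t <= T ->
     dt hm t x y + div (fun s a b => hm s a b * u1 s a b)
                       (fun s a b => hm s a b * u2 s a b) t x y
     = S_h f omega nu (hm t x y) (Am t x y))
  (HA_eq : forall t x y, 0 <= t <= T ->
     dt Am t x y + div (fun s a b => Am s a b * u1 s a b)
                       (fun s a b => Am s a b * u2 s a b) t x y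
     = S_A f h0 omega nu (hm t x y) (Am t x y)
       + Am t x y * div u1 u2 t x y * chi_A omega (Am t x y))
  (Hin_per : periodic2 A_in)
  (Hin : forall x y, 0 <= A_in x y <= 1)
  (HA0 : forall x y, Am 0 x y = A_in x y) :
  forall t x y, 0 <= t <= T -> 0 <= Am t x y <= 1.
Proof.
  destruct HA_reg as [At [Ax [Ay [HAd [HAc [HAtc _]]]]]].
  destruct Hu_reg1 as [U1t [U1x [U1y [HU1d [_ [_ [HU1xc _]]]]]]].
  destruct Hu_reg2 as [U2t [U2x [U2y [HU2d [_ [_ [_ HU2yc]]]]]]].
  set (D := fun t x y => U1x t x y + U2y t x y).
  assert (HA_init : forall x y, 0 <= Am 0 x y <= 1) by (intros x y; rewrite HA0; apply Hin).
  assert (Htransport : forall t x y, 0 <= t <= T ->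
    At t x y + Ax t x y * u1 t x y + Ay t x y * u2 t x y
    = S_A f h0 omega nu (hm t x y) (Am t x y)
      + Am t x y * D t x y * (chi_A omega (Am t x y) - 1)).
  { intros t x y Ht. apply nonconservative_form; try apply HAd; try apply HU1d; try apply HU2d.
    apply HA_eq, Ht. }
  assert (HD : cont3 D) by exact (cont3_plus _ _ HU1xc HU2yc).
  intros t x y Ht. split.
  - apply (concentration_ge_0 f h0 omega nu T u1 u2 hm Am At Ax Ay D); try tauto;
      intros; apply HAd.
  - apply (concentration_le_1 f h0 omega nu T u1 u2 hm Am At Ax Ay D); try tauto;
      intros; apply HAd.
Qed.
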